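(* Consider the problem $\min_{x\in\mathbb R^n} f(x)$ subject to $Ax=b$, where $f:\mathbb R^n\to\mathbb R$ is convex and continuously differentiable, $A\in\mathbb R^{m\times n}$, $b\in\mathbb R^m$, and assume the KKT set $\Omega$ is nonempty. Let $\{(x_k,\lambda_k)\}_{k\ge0}$ be generated by the accelerated augmented Lagrangian method described in the context (in either Case I or Case II). Then every cluster point of $\{(x_k,\lambda_k)\}_{k\ge0}$ belongs to $\Omega$.
   Context: The KKT set is $\Omega=\{(x^*,\lambda^* )\in\mathbb R^n\times\mathbb R^m: Ax^*=b,\ \nabla f(x^* )+A^\top\lambda^*=0\}$. Parameter sequence: $\{t_k\}_{k\ge1}$ is nondecreasing, $t_1=1$, $t_k>1$ for all $k>2$, $t_k\to+\infty$, and $t_{k+1}^2-t_k^2\le\rho t_{k+1}$ for all $k\ge 1$, with fixed $\rho\in(0,1]$. Fix $\eta\in[\rho,1]$, $\gamma>0$, $\delta>0$, $\beta\ge0$. Algorithm: initial points $x_0=x_1\in\mathbb R^n$, $\lambda_0=\lambda_1\in\mathbb R^m$. For $k=1,2,\dots$: set $\alpha_k=(t_{k+1}-\eta)/\eta$, $c_k=t_{k+1}/\eta$, $\bar x_k=x_k+\frac{t_k-1}{t_{k+1}}(x_k-x_{k-1})$, $\bar\lambda_k=\lambda_k+\frac{t_k-1}{t_{k+1}}(\lambda_k-\lambda_{k-1})$, $p_k=c_k\bar\lambda_k-\alpha_k\lambda_k$, $r_k=\alpha_kAx_k+b$. Case I ($f$ convex and $C^1$): $x_{k+1}=\arg\min_{x}\{f(x)+\frac\beta2\|Ax-b\|^2+\frac1{2\gamma}\|x-\bar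 x_k\|^2+\langle p_k,Ax-b\rangle+\frac\delta2\|c_kAx-r_k\|^2\}$. Case II ($f$ convex with $L$-Lipschitz gradient, and $\gamma\le 1/L$): $x_{k+1}=\arg\min_{x}\{\langle\nabla f(\bar x_k),x\rangle+\frac\beta2\|Ax-b\|^2+\frac1{2\gamma}\|x-\bar x_k\|^2+\langle p_k,Ax-b\rangle+\frac\delta2\|c_kAx-r_k\|^2\}$. Then $\lambda_{k+1}=\bar\lambda_k+\delta(c_kAx_{k+1}-r_k)$. *)

From HB Require Import structures.
From mathcomp Require Import all_boot all_order all_algebra.
From mathcomp Require Import all_classical all_reals all_analysis.
Set Implicit Arguments. Unset Strict Implicit. Unset Printing Implicit Defensive.
Import Order.TTheory GRing.Theory Num.Theory.
Import numFieldNormedType.Exports.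
Local Open Scope classical_set_scope.
Local Open Scope ring_scope.

Definition dotv (R : realType) (p : nat) (u v : 'cV[R]_p) : R :=
  \sum_(i < p) u i 0 * v i 0.

Definition sqn (R : realType) (p : nat) (u : 'cV[R]_p) : R := dotv u u.

Definition enorm (R : realType) (p : nat) (u : 'cV[R]_p) : R := Num.sqrt (sqn u).

Definition convex_fun (R : realType) (n : nat) (f : 'cV[R]_n -> R) : Prop :=
  forall (x y : 'cV[R]_n) (s : R), 0 <= s <= 1 ->
    f (s *: x + (1 - s) *: y) <= s * f x + (1 - s) * f y.

Definition C1_with_gradient (R : realType) (n : nat)
    (f : 'cV[R]_n -> R) (grad : 'cV[R]_n -> 'cV[R]_n) : Prop :=
  (forall x, differentiable f x /\ forall h, 'd f x h = dotv (grad x) h)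
  /\ continuous grad.

Definition KKT_set (R : realType) (n m : nat) (grad : 'cV[R]_n -> 'cV[R]_n)
    (A : 'M[R]_(m, n)) (b : 'cV[R]_m) (x : 'cV[R]_n) (l : 'cV[R]_m) : Prop :=
  A *m x = b /\ grad x + A^T *m l = 0.

(* parameter sequence assumptions (t is indexed from 1; t 0 is unused) *)
Definition param_seq (R : realType) (t : nat -> R) (rho : R) : Prop :=
  (forall k, (1 <= k)%N -> t k <= t k.+1) /\
  t 1%N = 1 /\
  (forall k, (2 < k)%N -> 1 < t k) /\
  (t @ \oo --> +oo) /\
  (forall k, (1 <= k)%N -> t k.+1 ^+ 2 - t k ^+ 2 <= rho * t k.+1).

Section Alg.
Variables (R : realType) (n m : nat) (A : 'M[R]_(m, n)) (b : 'cV[R]_m)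
  (t : nat -> R) (eta : R) (x : nat -> 'cV[R]_n) (lam : nat -> 'cV[R]_m).

Definition alpha k := (t k.+1 - eta) / eta.
Definition cc k := t k.+1 / eta.
Definition xbar k := x k + ((t k - 1) / t k.+1) *: (x k - x k.-1).
Definition lbar k := lam k + ((t k - 1) / t k.+1) *: (lam k - lam k.-1).
Definition pk k := cc k *: lbar k - alpha k *: lam k.
Definition rk k := alpha k *: (A *m x k) + b.

Definition obj1 (f : 'cV[R]_n -> R) (beta gamma delta : R) k (z : 'cV[R]_n) : R :=
  f z + beta / 2 * sqn (A *m z - b) + 1 / (2 * gamma) * sqn (z - xbar k)
  + dotv (pk k) (A *m z - b) + delta / 2 * sqn (cc k *: (A *m z) - rk k).

Definition obj2 (grad : 'cV[R]_n -> 'cV[R]_n) (beta gamma delta : R) k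
    (z : 'cV[R]_n) : R :=
  dotv (grad (xbar k)) z + beta / 2 * sqn (A *m z - b)
  + 1 / (2 * gamma) * sqn (z - xbar k)
  + dotv (pk k) (A *m z - b) + delta / 2 * sqn (cc k *: (A *m z) - rk k).

End Alg.

(* Lyapunov argument.  Fix a KKT pair (xo, lo), put T_k = t_k / eta,
   eps = 1/eta - 1 and F = f + beta/2 |A . - b|^2, and extrapolate
   xhat_k = x_{k-1} + T_k (x_k - x_{k-1}), lhat_k = lam_{k-1} + T_k (lam_k - lam_{k-1}).
   Both subproblems make A^T lhat_{k+1} + (x_{k+1} - xbar_k)/gamma an approximate
   subgradient of F at x_{k+1}; with the multiplier update this makes the energy
     T_k^2 (F x_k - F xo + <lo, A x_k - b>)
       + (|xhat_k - xo|^2 + eps |x_{k-1} - xo|^2) / (2 gamma)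
       + (|lhat_k - lo|^2 + eps |lam_{k-1} - lo|^2) / (2 delta)
   nonincreasing.  As T_k -> oo, the Lagrangian gap, |A x_k - b|^2 (which is
   O(1/T_k^2)) and |x_{k+1} - xbar_k|^2 vanish while all iterates stay bounded.
   At a cluster point (xs, ls) this gives A xs = b and F xs <= F xo, and since
   lam_k is a running average of the lhat_k, F xo <= F z + <ls, A z - b> for
   every z.  So xs minimizes F + <ls, A . - b>, whence grad f xs + A^T ls = 0. *)

From HB Require Import structures.
From mathcomp Require Import all_boot all_order all_algebra.
From mathcomp Require Import all_classical all_reals all_analysis.
From mathcomp Require Import ring lra.
Import Order.TTheory GRing.Theory Num.Theory.
Import numFieldNormedType.Exports.
Local Open Scope classical_set_scope.
Local Open Scope ring_scope.

Set Implicit Arguments. Unset Strict Implicit. Unset Printing Implicit Defensive.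

(** * The Euclidean inner product *)

Section Dotv.
Variables (R : realType) (p : nat).
Implicit Types (u v w : 'cV[R]_p) (a : R).

Lemma dotvC u v : dotv u v = dotv v u.
Proof. by apply: eq_bigr => i _; rewrite mulrC. Qed.

Lemma dotvDl u v w : dotv (u + v) w = dotv u w + dotv v w.
Proof. by rewrite /dotv -big_split; apply: eq_bigr => i _; rewrite mxE mulrDl. Qed.

Lemma dotvDr u v w : dotv w (u + v) = dotv w u + dotv w v.
Proof. by rewrite dotvC dotvDl !(dotvC w). Qed.

Lemma dotvZl a u v : dotv (a *: u) v = a * dotv u v.
Proof. by rewrite /dotv mulr_sumr; apply: eq_bigr => i _; rewrite mxE mulrA. Qed.

Lemma dotvZr a u v : dotv v (a *: u) = a * dotv v u.
Proof. by rewrite dotvC dotvZl dotvC. Qed.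

Lemma dotvNl u v : dotv (- u) v = - dotv u v.
Proof. by rewrite -scaleN1r dotvZl mulN1r. Qed.

Lemma dotvNr u v : dotv v (- u) = - dotv v u.
Proof. by rewrite dotvC dotvNl dotvC. Qed.

Lemma dotvBl u v w : dotv (u - v) w = dotv u w - dotv v w.
Proof. by rewrite dotvDl dotvNl. Qed.

Lemma dotvBr u v w : dotv w (u - v) = dotv w u - dotv w v.
Proof. by rewrite dotvDr dotvNr. Qed.

Lemma dotv0l v : dotv 0 v = 0.
Proof. by rewrite /dotv big1 // => i _; rewrite mxE mul0r. Qed.

Lemma sqn_ge0 u : 0 <= sqn u.
Proof. by rewrite /sqn /dotv sumr_ge0 // => i _; rewrite -expr2 sqr_ge0. Qed.

Lemma sqn_eq0 u : sqn u = 0 -> u = 0.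
Proof.
move/eqP; rewrite /sqn /dotv psumr_eq0 => [/allP u0|i _]; last first.
  by rewrite -expr2 sqr_ge0.
apply/matrixP => i j; rewrite ord1 mxE.
by have /= := u0 i (mem_index_enum _); rewrite -expr2 sqrf_eq0 => /eqP.
Qed.

Lemma sqn0 : sqn (0 : 'cV[R]_p) = 0.
Proof. exact: dotv0l. Qed.

Lemma sqnD u v : sqn (u + v) = sqn u + 2 * dotv u v + sqn v.
Proof. rewrite /sqn !dotvDl !dotvDr (dotvC v u); ring. Qed.

Lemma sqnB u v : sqn (u - v) = sqn u - 2 * dotv u v + sqn v.
Proof. rewrite /sqn !dotvDl !dotvDr !dotvNl !dotvNr (dotvC v u); ring. Qed.

Lemma sqnZ a u : sqn (a *: u) = a ^+ 2 * sqn u.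
Proof. rewrite /sqn dotvZl dotvZr; ring. Qed.

Lemma sqnN u : sqn (- u) = sqn u.
Proof. by rewrite /sqn dotvNl dotvNr opprK. Qed.

Lemma eq0_of_dotv_ge0 u : (forall v, 0 <= dotv u v) -> u = 0.
Proof.
move=> u_ge0; apply: sqn_eq0; apply/eqP; rewrite eq_le sqn_ge0 andbT.
by have := u_ge0 (- u); rewrite dotvNr /sqn oppr_ge0.
Qed.

Lemma dotv_sqr_le u v : dotv u v ^+ 2 <= sqn u * sqn v.
Proof.
have [/sqn_eq0 ->|u_neq0] := eqVneq (sqn u) 0.
  by rewrite dotv0l sqn0 expr2 !mul0r.
have u_gt0 : 0 < sqn u by rewrite lt_def u_neq0 sqn_ge0.
have := sqn_ge0 (sqn u *: v - dotv u v *: u).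
rewrite sqnB !sqnZ dotvZl dotvZr (dotvC v u) /sqn => h.
have : 0 <= sqn u * (sqn u * sqn v - dotv u v ^+ 2) by rewrite /sqn; nra.
by rewrite pmulr_rge0 // subr_ge0.
Qed.

Lemma sqnD_le u v : sqn (u + v) <= 2 * sqn u + 2 * sqn v.
Proof. by rewrite sqnD; have := sqn_ge0 (u - v); rewrite sqnB; lra. Qed.

Lemma sqnB_le u v : sqn (u - v) <= 2 * sqn u + 2 * sqn v.
Proof. by rewrite -(sqnN v) sqnD_le. Qed.

Lemma sqnB_le_center u v w B : sqn (u - w) <= B -> sqn (v - w) <= B -> sqn (u - v) <= 4 * B.
Proof.
move=> uB vB; have := sqnB_le (u - w) (v - w).
by rewrite opprB addrA subrK; lra.
Qed.

Lemma sqn_le_center u w : sqn u <= 2 * sqn (u - w) + 2 * sqn w.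
Proof. by have := sqnD_le (u - w) w; rewrite subrK. Qed.

Lemma sqn_convex a u v : 0 <= a <= 1 ->
  sqn (a *: u + (1 - a) *: v) <= a * sqn u + (1 - a) * sqn v.
Proof.
move=> /andP[a0 a1]; have := sqn_ge0 (u - v).
have : 0 <= a * (1 - a) by rewrite mulr_ge0 // subr_ge0.
rewrite sqnB sqnD !sqnZ dotvZl dotvZr /sqn; nra.
Qed.

Lemma sqn_convex_le a B u v : 0 <= a <= 1 -> sqn u <= B -> sqn v <= B ->
  sqn (a *: u + (1 - a) *: v) <= B.
Proof.
move=> a01 uB vB; apply: le_trans (sqn_convex _ _ a01) _.
by case/andP: a01 => a0 a1; nra.
Qed.

Lemma normr_dotv_le u v B e : 0 <= B -> 0 < e ->
  sqn u <= B -> sqn v <= e ^+ 2 / (B + 1) -> `|dotv u v| <= e.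
Proof.
move=> B0 e0 uB ve.
rewrite -(@ler_pXn2r _ 2) ?nnegrE ?normr_ge0 ?(ltW e0) // real_normK ?num_real //.
apply: le_trans (dotv_sqr_le u v) _.
apply: le_trans (ler_pM (sqn_ge0 _) (sqn_ge0 _) uB ve) _.
rewrite mulrA ler_pdivrMr; last by lra.
by have := sqr_ge0 e; nra.
Qed.

Lemma dotv_le_enorm u v : dotv u v <= enorm u * enorm v.
Proof.
have [uv0|uv_gt0] := lerP (dotv u v) 0.
  by apply: le_trans uv0 _; rewrite mulr_ge0 // sqrtr_ge0.
rewrite /enorm -sqrtrM ?sqn_ge0 // -[dotv u v]gtr0_norm // -sqrtr_sqr.
by rewrite ler_sqrt ?dotv_sqr_le // mulr_ge0 // sqn_ge0.
Qed.

Lemma enormZ a u : 0 <= a -> enorm (a *: u) = a * enorm u.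
Proof. by move=> a0; rewrite /enorm sqnZ sqrtrM ?sqr_ge0 // sqrtr_sqr ger0_norm. Qed.

Lemma dotv_mulmx q (M : 'M[R]_(q, p)) (u : 'cV[R]_q) v :
  dotv u (M *m v) = dotv (M^T *m u) v.
Proof.
have dotvE r (a c : 'cV[R]_r) : dotv a c = (a^T *m c) 0 0.
  by rewrite mxE; apply: eq_bigr => i _; rewrite mxE.
by rewrite !dotvE trmx_mul trmxK mulmxA.
Qed.

End Dotv.

(** * First-order calculus of convex functions *)

Section RealLimits.
Variable R : realType.

Lemma is_derive_of_cvg (phi : R -> R) (a l : R) :
  s^-1 * (phi (s + a) - phi a) @[s --> 0^'] --> l -> is_derive a 1 phi l.
Proof.
have -> : (fun s : R => s^-1 * (phi (s + a) - phi a))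
        = (fun s => s^-1 *: ((phi \o shift a) (s *: 1) - phi a)).
  by apply: funext => s /=; rewrite [s *: 1]mulr1.
by move=> ql; apply: DeriveDef; [apply/cvg_ex; exists l | apply: cvg_lim].
Qed.

Lemma ge0_of_forall_small (a c : R) :
  (forall s, 0 < s <= 1 -> 0 <= a + s * c) -> 0 <= a.
Proof.
move=> small_ge0; have : a + s * c @[s --> 0^'+] --> a + 0 * c.
  by apply: cvgD; [exact: cvg_cst | apply: cvgMr_tmp; exact: cvg_at_right_filter].
rewrite mul0r addr0 => /cvgr_to_ge; apply; near=> s; apply: small_ge0; apply/andP; split.
  by near: s; exact: nbhs_right_gt.
by near: s; exact: nbhs_right_le.
Unshelve. all: by end_near.
Qed.

End RealLimits.

Section Gradient.
Variables (R : realType) (n : nat) (f : 'cV[R]_n -> R) (grad : 'cV[R]_n -> 'cV[R]_n).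
Hypothesis f_C1 : C1_with_gradient f grad.

Lemma directional_derivative_cvg x v :
  s^-1 * (f (x + s *: v) - f x) @[s --> 0^'] --> dotv (grad x) v.
Proof.
have [fx dfx] := f_C1.1 x.
have /cvg_ex[l ql] : derivable f x v by apply: diff_derivable.
have -> : dotv (grad x) v = 'D_v f x by rewrite deriveE // dfx.
have -> : (fun s : R => s^-1 * (f (x + s *: v) - f x))
        = (fun s => s^-1 *: ((f \o shift x) (s *: v) - f x)).
  by apply: funext => s /=; rewrite [s *: v + x]addrC.
by rewrite /derive (cvg_lim _ ql).
Qed.

Lemma is_derive_along_line x h (a : R) :
  is_derive a 1 (fun s => f (x + s *: h)) (dotv (grad (x + a *: h)) h).
Proof.
apply: is_derive_of_cvg.
apply: cvg_trans (directional_derivative_cvg (x := x + a *: h) (v := h)).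
by apply: near_eq_cvg; near=> s; rewrite [s + a]addrC scalerDl addrA.
Unshelve. all: by end_near.
Qed.

Lemma convex_gradient_ineq : convex_fun f ->
  forall x y, f x + dotv (grad x) (y - x) <= f y.
Proof.
move=> f_cvx x y; rewrite -lerBrDl.
apply: (cvgr_to_le (cvg_dnbhs_at_right (directional_derivative_cvg (x := x) (v := y - x)))).
near=> s.
have s_gt0 : 0 < s by near: s; exact: nbhs_right_gt.
have s_le1 : s <= 1 by near: s; exact: nbhs_right_le.
have -> : x + s *: (y - x) = s *: y + (1 - s) *: x.
  by apply/matrixP => i j; rewrite !mxE; ring.
rewrite ler_pdivrMl //; have := f_cvx y x s; rewrite ltW //= s_le1; lra.
Unshelve. all: by end_near.
Qed.

Lemma grad_eq_of_lower_model x g :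
  (forall v, exists2 K, 0 <= K & forall s, 0 < s <= 1 ->
     f x - s * dotv g v - s ^+ 2 * K <= f (x + s *: v)) ->
  grad x + g = 0.
Proof.
move=> model; apply: eq0_of_dotv_ge0 => v; have [K K0 fK] := model v.
have quot_cvg : s^-1 * (f (x + s *: v) - f x) + dotv g v + s * K @[s --> 0^'+]
                --> dotv (grad x) v + dotv g v + 0 * K.
  apply: cvgD; first by apply: cvgD; [exact/cvg_dnbhs_at_right/directional_derivative_cvg
                                    | exact: cvg_cst].
  by apply: cvgMr_tmp; exact: cvg_at_right_filter.
rewrite mul0r addr0 -dotvDl in quot_cvg; apply: (cvgr_to_ge quot_cvg).
near=> s.
have s_gt0 : 0 < s by near: s; exact: nbhs_right_gt.
have s_le1 : s <= 1 by near: s; exact: nbhs_right_le.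
have := fK s; rewrite s_gt0 s_le1 => /(_ isT) fs.
have -> : s^-1 * (f (x + s *: v) - f x) + dotv g v + s * K
          = s^-1 * (f (x + s *: v) - f x + s * dotv g v + s ^+ 2 * K).
  by field; rewrite gt_eqF.
by rewrite mulr_ge0 ?invr_ge0 ?(ltW s_gt0) //; lra.
Unshelve. all: by end_near.
Qed.

Lemma lagrangian_min_grad (m : nat) (A : 'M[R]_(m, n)) (b : 'cV[R]_m) (beta : R) xs l :
  0 <= beta -> A *m xs = b ->
  (forall z, f xs <= f z + beta / 2 * sqn (A *m z - b) + dotv l (A *m z - b)) ->
  grad xs + A^T *m l = 0.
Proof.
move=> beta0 Axs xs_min; apply: grad_eq_of_lower_model => v.
exists (beta / 2 * sqn (A *m v)); first by rewrite mulr_ge0 ?sqn_ge0 // divr_ge0.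
move=> s _; have := xs_min (xs + s *: v).
have -> : A *m (xs + s *: v) - b = s *: (A *m v).
  by rewrite mulmxDr Axs -scalemxAr addrAC subrr add0r.
by rewrite sqnZ dotvZr dotv_mulmx; lra.
Qed.

Section Lipschitz.
Variable L : R.
Hypothesis grad_lipschitz : forall y z, enorm (grad y - grad z) <= L * enorm (y - z).

Lemma descent_lemma x y : f y <= f x + dotv (grad x) (y - x) + L / 2 * sqn (y - x).
Proof.
set h := y - x; set c := dotv (grad x) h.
pose phi (a : R) := f (x + a *: h) - a * c - L / 2 * sqn h * a ^+ 2.
have phi_der (a : R) : is_derive a 1 phi (dotv (grad (x + a *: h)) h - c - L * sqn h * a).
  have -> : phi = (fun s => f (x + s *: h)) - c \*: id - (L / 2 * sqn h) \*: (@id R) ^+ 2.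
    by apply/funext => s /=; rewrite /phi !fctE /= mulrC expr2.
  apply: is_derive_eq; first by do 2 apply: is_deriveB; exact: is_derive_along_line.
  rewrite -[c%:A]/(c * 1) -[(2 * _)%:A]/((2 * a ^+ 1) * 1) -[_ *: (_ * 1)]/(_ * (_ * 1)).
  by rewrite expr1; field.
have phi_derivable (a : R) : derivable phi a 1 by have [] := phi_der a.
have phi10 : phi 1 <= phi 0.
  apply: (@ler0_derive1_nincr _ phi 0 1) => //.
    move=> a; rewrite in_itv /= => /andP[a0 _].
    rewrite derive1E (@derive_val _ _ _ _ _ _ _ (phi_der a)) subr_le0 /c -dotvBl.
    apply: le_trans (dotv_le_enorm _ _) _.
    have := grad_lipschitz (x + a *: h) x; rewrite addrAC subrr add0r (enormZ _ (ltW a0)).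
    have -> : L * sqn h * a = L * (a * enorm h) * enorm h.
      by rewrite -[sqn h](sqr_sqrtr (sqn_ge0 h)); rewrite -/(enorm h); ring.
    by move=> /ler_wpM2r; apply; exact: sqrtr_ge0.
  by apply: derivable_within_continuous => a _; exact: phi_derivable.
move: phi10; rewrite /phi scale0r addr0 scale1r mul0r subr0 expr0n /= mulr0 subr0.
by rewrite expr1n mulr1 mul1r /h [x + _]addrC subrK; lra.
Qed.

End Lipschitz.
End Gradient.

(** * Limits at cluster points *)

Section ClusterLimits.
Variable R : realType.

Lemma cluster_ge {U : topologicalType} (u : nat -> U) (p : U) (h : U -> R) (c : R) :
  cluster (u @ \oo) p -> h q @[q --> p] --> h p ->
  (forall e, 0 < e -> \forall k \near \oo, c - e <= h (u k)) -> c <= h p.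
Proof.
move=> up hp near_ge; rewrite leNgt; apply/negP => hpc.
pose e := (c - h p) / 2.
have e_gt0 : 0 < e by rewrite divr_gt0 // subr_gt0.
have near_p : \forall q \near p, h q < c - e by apply: cvgr_lt hp _ _; rewrite /e; lra.
have [q [/= hq1 hq2]] := up [set q | c - e <= h q] _ (near_ge e e_gt0) near_p.
lra.
Qed.

Context {T : Type} {F : set_system T} {FF : Filter F}.

Lemma cvg_dotv_entries p (u v : T -> 'cV[R]_p) (a c : 'cV[R]_p) :
  (forall i, u z i 0 @[z --> F] --> a i 0) -> (forall i, v z i 0 @[z --> F] --> c i 0) ->
  dotv (u z) (v z) @[z --> F] --> dotv a c.
Proof.
move=> ua vc; apply: cvg_big => [|i _]; first exact: add_continuous.
exact: cvgM.
Qed.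

Lemma cvg_affine_entries q p (M : 'M[R]_(q, p)) (d : 'cV[R]_q) (u : T -> 'cV[R]_p) (a : 'cV[R]_p) :
  (forall j, u z j 0 @[z --> F] --> a j 0) ->
  forall i, (M *m u z - d) i 0 @[z --> F] --> (M *m a - d) i 0.
Proof.
move=> ua i; rewrite !mxE; under eq_fun do rewrite !mxE.
apply: cvgB; last exact: cvg_cst.
by apply: cvg_big => [|j _]; [exact: add_continuous | exact: cvgMl_tmp].
Qed.

Lemma cvg_sqn_affine q p (M : 'M[R]_(q, p)) (d : 'cV[R]_q) (u : T -> 'cV[R]_p) (a : 'cV[R]_p) :
  (forall j, u z j 0 @[z --> F] --> a j 0) ->
  sqn (M *m u z - d) @[z --> F] --> sqn (M *m a - d).
Proof. by move=> ua; apply: cvg_dotv_entries; exact: cvg_affine_entries. Qed.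

End ClusterLimits.

Lemma cvg_fst_entries (R : realType) p q (u : 'cV[R]_p) (v : 'cV[R]_q) (i : 'I_p) :
  (fun z : 'cV[R]_p * 'cV[R]_q => z.1 i 0) @ (u, v) --> u i 0.
Proof.
have fst_uv : (fun z : 'cV[R]_p * 'cV[R]_q => z.1) @ (u, v) --> u by exact: cvg_fst.
exact: (cvg_comp _ _ fst_uv (@coord_continuous _ p 1 i 0 u)).
Qed.

Lemma cvg_snd_entries (R : realType) p q (u : 'cV[R]_p) (v : 'cV[R]_q) (i : 'I_q) :
  (fun z : 'cV[R]_p * 'cV[R]_q => z.2 i 0) @ (u, v) --> v i 0.
Proof.
have snd_uv : (fun z : 'cV[R]_p * 'cV[R]_q => z.2) @ (u, v) --> v by exact: cvg_snd.
exact: (cvg_comp _ _ snd_uv (@coord_continuous _ q 1 i 0 v)).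
Qed.

(** * Eventual bounds for sequences *)

Section Sequences.
Variable R : realType.

Lemma near_infty_succ (P : nat -> Prop) :
  (\forall k \near \oo, P k) -> \forall k \near \oo, P k.+1.
Proof. by case=> N _ PN; exists N => // k /leqW; exact: PN. Qed.

Lemma near_le_of_scaled_bound (T a : nat -> R) (C e : R) :
  T @ \oo --> +oo -> 0 < e -> (\forall k \near \oo, T k ^+ 2 * a k <= C) ->
  \forall k \near \oo, a k <= e.
Proof.
move=> /cvgryPge T_big e_gt0 Ta; near=> k.
have Tk_ge1 : 1 <= T k by near: k; exact: T_big.
have Tk_big : C / e + 1 <= T k by near: k; exact: T_big.
have Tk_gt0 : 0 < T k ^+ 2 by rewrite exprn_gt0 // (lt_le_trans ltr01).
have : T k <= T k ^+ 2 by rewrite expr2 ler_peMl // (le_trans ler01).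
have : e * (C / e + 1) = C + e by field; rewrite gt_eqF.
have : e * (C / e + 1) <= e * T k by rewrite ler_pM2l.
have : T k ^+ 2 * a k <= C by near: k.
move=> TaC eT eC TT2; rewrite -(ler_pM2l Tk_gt0); nra.
Unshelve. all: by end_near.
Qed.

(* If [T] grows at most by one per step, a sequence obeying
   [T (k+1) a (k+1) = (T (k+1) - 1) a k + c (k+1)] is an average of the
   [c]'s with weights tending to the tail, hence inherits their lower bounds. *)
Lemma averaging_lower_bound (T a c : nat -> R) (l e : R) :
  0 < e -> T @ \oo --> +oo ->
  (\forall k \near \oo, [/\ 1 <= T k, T k.+1 - 1 <= T k,
     T k.+1 * a k.+1 = (T k.+1 - 1) * a k + c k.+1 & l - e <= c k.+1]) ->
  \forall k \near \oo, l - 2 * e <= a k.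
Proof.
move=> e_gt0 /cvgryPge T_big [N _ near_N].
pose z k := T k * (a k - l + e).
have z_lb j : - `|z N| <= z (N + j)%N.
  elim: j => [|j IH]; first by rewrite addn0 lerNnormlW.
  have [_ T_step rec c_lb] := near_N (N + j)%N (leq_addr _ _).
  have [T_ge1 _ _ _] := near_N (N + j).+1 (leqW (leq_addr _ _)).
  rewrite addnS /z.
  have -> : T (N + j).+1 * (a (N + j).+1 - l + e)
          = (T (N + j).+1 - 1) * (a (N + j) - l + e) + (c (N + j).+1 - l + e).
    by rewrite mulrDr mulrBr rec; ring.
  have [a_ge|a_lt] := lerP 0 (a (N + j) - l + e).
    have : 0 <= (T (N + j).+1 - 1) * (a (N + j) - l + e) by rewrite mulr_ge0 ?subr_ge0.
    by have := normr_ge0 (z N); lra.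
  have : z (N + j)%N <= (T (N + j).+1 - 1) * (a (N + j) - l + e).
    by rewrite /z ler_wnM2r // ltW.
  by move: IH; rewrite /z; lra.
near=> k.
have Nk : (N <= k)%N by near: k; exact: nbhs_infty_ge.
have Tk_gt0 : 0 < T k by apply: lt_le_trans ltr01 _; near: k; exact: T_big.
have Tk_big : `|z N| / e <= T k by near: k; exact: T_big.
have := z_lb (k - N)%N; rewrite subnKC //.
have : `|z N| <= e * T k by rewrite -ler_pdivrMl // mulrC.
rewrite /z => zN_le zk_ge.
have : 0 <= T k * (a k - (l - 2 * e)) by lra.
by rewrite pmulr_rge0 // subr_ge0.
Unshelve. all: by end_near.
Qed.

Lemma sqn_le_of_convex_recursion p (u w : nat -> 'cV[R]_p) (r : nat -> R) (B : R) :
  (forall k, (1 <= k)%N ->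
     [/\ 0 <= r k <= 1, u k.+1 = r k *: u k + (1 - r k) *: w k & sqn (w k) <= B]) ->
  forall k, (1 <= k)%N -> sqn (u k) <= sqn (u 1%N) + B.
Proof.
move=> rec; have [_ _ w1B] := rec 1%N isT.
have B_ge0 : 0 <= B := le_trans (sqn_ge0 _) w1B.
elim=> // -[_ _|k IH _]; first by lra.
have [r01 -> wB] := rec k.+1 isT.
by apply: sqn_convex_le => //; [exact: IH | have := sqn_ge0 (u 1%N); lra].
Qed.

End Sequences.

(** * The accelerated augmented Lagrangian method *)

Section AffineAlgebra.
Variables (R : realType) (p q : nat).
Implicit Types (M : 'M[R]_(q, p)) (d : 'cV[R]_q) (u v z : 'cV[R]_p) (s : R).

Lemma mulmx_affine_step M d z v s : M *m (z + s *: v) - d = (M *m z - d) + s *: (M *m v).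
Proof. by rewrite mulmxDr -scalemxAr addrAC. Qed.

Lemma sqn_affine_step M d z v s :
  sqn (M *m (z + s *: v) - d)
  = sqn (M *m z - d) + 2 * s * dotv (M^T *m (M *m z - d)) v + s ^+ 2 * sqn (M *m v).
Proof. by rewrite mulmx_affine_step sqnD sqnZ dotvZr dotv_mulmx; ring. Qed.

Lemma sqn_shift_step u z v s :
  sqn (z + s *: v - u) = sqn (z - u) + 2 * s * dotv (z - u) v + s ^+ 2 * sqn v.
Proof. by rewrite [z + _ - u]addrAC (sqnD (z - u)) sqnZ dotvZr; ring. Qed.

Lemma dotv_affine_step M d (l : 'cV[R]_q) z v s :
  dotv l (M *m (z + s *: v) - d) = dotv l (M *m z - d) + s * dotv (M^T *m l) v.
Proof. by rewrite mulmx_affine_step dotvDr dotvZr dotv_mulmx. Qed.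

Lemma sqn_affine_lower M d z u :
  sqn (M *m z - d) + 2 * dotv (M^T *m (M *m z - d)) (u - z) <= sqn (M *m u - d).
Proof.
have -> : M *m u - d = (M *m z - d) + M *m (u - z).
  by rewrite mulmxBr; apply/matrixP => i j; rewrite !mxE; ring.
by rewrite -dotv_mulmx (sqnD (M *m z - d)); have := sqn_ge0 (M *m (u - z)); lra.
Qed.

Lemma extrapolation_convex T u0 u1 : T != 0 ->
  u1 = (1 - T^-1) *: u0 + T^-1 *: (u0 + T *: (u1 - u0)).
Proof. by move=> T0; apply/matrixP => i j; rewrite !mxE; field. Qed.

(* Three-point identity: the cross term [dotv D (w1 - o)] telescopes in the energy. *)
Lemma extrapolation_identity u0 u1 w1 o T e :
  let w0 := u0 + T *: (u1 - u0) in let D := w1 - w0 + e *: (u1 - u0) in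
  dotv D (w1 - o)
  = (sqn (w1 - o) / 2 + e / 2 * sqn (u1 - o)) - (sqn (w0 - o) / 2 + e / 2 * sqn (u0 - o))
    + sqn D / 2 + e * (T - (1 + e) / 2) * sqn (u1 - u0).
Proof.
move=> w0 D.
have -> : D = (w1 - o) - ((u0 - o) + T *: ((u1 - o) - (u0 - o))) + e *: ((u1 - o) - (u0 - o)).
  by apply/matrixP => i j; rewrite !mxE; ring.
have -> : w0 - o = (u0 - o) + T *: ((u1 - o) - (u0 - o)).
  by apply/matrixP => i j; rewrite !mxE; ring.
have -> : u1 - u0 = (u1 - o) - (u0 - o) by apply/matrixP => i j; rewrite !mxE; ring.
move: (w1 - o) (u0 - o) (u1 - o) => a c c'.
rewrite /sqn !(dotvDl, dotvDr, dotvZl, dotvZr, dotvNl, dotvNr).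
by rewrite [dotv c a]dotvC [dotv c' a]dotvC [dotv c' c]dotvC; field.
Qed.

End AffineAlgebra.

Section Algorithm.
Variables (R : realType) (n m : nat)
  (f : 'cV[R]_n -> R) (grad : 'cV[R]_n -> 'cV[R]_n)
  (A : 'M[R]_(m, n)) (b : 'cV[R]_m)
  (t : nat -> R) (rho eta gamma delta beta : R)
  (x : nat -> 'cV[R]_n) (lam : nat -> 'cV[R]_m).
Hypotheses (f_cvx : convex_fun f) (f_C1 : C1_with_gradient f grad)
  (rho_range : 0 < rho <= 1) (t_param : param_seq t rho) (eta_range : rho <= eta <= 1)
  (gamma_gt0 : 0 < gamma) (delta_gt0 : 0 < delta) (beta_ge0 : 0 <= beta)
  (x_init : x 0%N = x 1%N) (lam_init : lam 0%N = lam 1%N)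
  (lam_update : forall k, (1 <= k)%N ->
     lam k.+1 = lbar t lam k + delta *: (cc t eta k *: (A *m x k.+1) - rk A b t eta x k)).

Definition Fpen u := f u + beta / 2 * sqn (A *m u - b).
Definition tau k := t k / eta.
Definition eps := eta^-1 - 1.

(* [x k.+1] lies on the segment from [x k] to [xhat k.+1] (Lemma [x_convex]). *)
Definition xhat k := x k.-1 + tau k *: (x k - x k.-1).
Definition lhat k := lam k.-1 + tau k *: (lam k - lam k.-1).
Definition dres k := x k.+1 - xbar t x k.

Lemma eta_gt0 : 0 < eta.
Proof. by case/andP: rho_range => rho_gt0 _; case/andP: eta_range => /(lt_le_trans rho_gt0). Qed.

Lemma t_ge1 k : (1 <= k)%N -> 1 <= t k.
Proof.
case: t_param => [t_incr [t1 _]]; elim: k => // -[_ _|k IH _]; first by rewrite t1.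
exact: le_trans (IH isT) (t_incr k.+1 isT).
Qed.

Lemma tau_ge1 k : (1 <= k)%N -> 1 <= tau k.
Proof.
move=> k1; rewrite /tau ler_pdivlMr ?eta_gt0 // mul1r.
by case/andP: eta_range => _ /le_trans; apply; exact: t_ge1.
Qed.

Lemma tau_gt0 k : (1 <= k)%N -> 0 < tau k.
Proof. by move/tau_ge1; apply: lt_le_trans ltr01. Qed.

Lemma tau_step k : (1 <= k)%N -> tau k.+1 - 1 <= tau k.
Proof.
move=> k1; case: t_param => [t_incr [_ [_ [_ t_sq]]]].
have := t_sq k k1; have := t_incr k k1; have := t_ge1 k1; have := t_ge1 (leqW k1).
case/andP: eta_range => rho_eta _; have eta0 := eta_gt0.
rewrite /tau ler_pdivlMr // mulrBl divfK ?gt_eqF // mul1r; nra.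
Qed.

Lemma tau_sq_step k : (1 <= k)%N -> tau k.+1 ^+ 2 - tau k.+1 <= tau k ^+ 2.
Proof.
move=> k1; case: t_param => [_ [_ [_ [_ t_sq]]]]; have := t_sq k k1.
have := t_ge1 (leqW k1); case/andP: eta_range => rho_eta _; have eta0 := eta_gt0.
have -> : tau k.+1 ^+ 2 - tau k.+1 = (t k.+1 ^+ 2 - eta * t k.+1) / eta ^+ 2.
  by rewrite /tau; field; rewrite gt_eqF.
by rewrite /tau expr_div_n ler_pM2r ?invr_gt0 ?exprn_gt0 //; nra.
Qed.

Lemma tau_cvgy : tau @ \oo --> +oo.
Proof.
case: t_param => [_ [_ [_ [t_cvgy _]]]]; apply/cvgryPge => M.
apply: filterS ((cvgryPge _).1 t_cvgy (M * eta)) => k.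
by rewrite /tau ler_pdivlMr ?eta_gt0.
Qed.

Lemma tau_inv_weight k : (1 <= k)%N -> 0 <= 1 - (tau k)^-1 <= 1.
Proof.
move=> /tau_ge1 T_ge1; have T_gt0 := lt_le_trans ltr01 T_ge1.
by rewrite subr_ge0 invf_le1 // T_ge1 /= lerBlDr lerDl invr_ge0 ltW.
Qed.

Lemma eps_ge0 : 0 <= eps.
Proof.
by rewrite subr_ge0 invr_ge1 ?unitfE ?gt_eqF ?eta_gt0 //; case/andP: eta_range.
Qed.

Lemma A_xhat k : cc t eta k *: (A *m x k.+1) - rk A b t eta x k = A *m xhat k.+1 - b.
Proof.
rewrite /cc /rk /alpha /xhat /tau mulmxDr -!scalemxAr mulmxBr.
by apply/matrixP => i j; rewrite !mxE; field; rewrite gt_eqF ?eta_gt0.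
Qed.

Lemma lam_step k : (1 <= k)%N -> lam k.+1 - lbar t lam k = delta *: (A *m xhat k.+1 - b).
Proof. by move=> k1; rewrite lam_update // A_xhat addrC addKr. Qed.

Lemma pk_step k : (1 <= k)%N ->
  pk t eta lam k + (delta * cc t eta k) *: (A *m xhat k.+1 - b) = lhat k.+1.
Proof.
move=> k1; have t_neq0 : t k.+1 != 0 by rewrite gt_eqF // (lt_le_trans ltr01) ?t_ge1.
rewrite mulrC -scalerA -(lam_step k1) /pk /lhat /cc /alpha /tau /=.
by apply/matrixP => i j; rewrite !mxE; field; rewrite t_neq0 gt_eqF ?eta_gt0.
Qed.

Lemma tau_dres k : (1 <= k)%N ->
  tau k.+1 *: dres k = (xhat k.+1 - xhat k) + eps *: (x k - x k.-1).
Proof.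
case: k => // k _; have t_neq0 : t k.+2 != 0 by rewrite gt_eqF // (lt_le_trans ltr01) ?t_ge1.
rewrite /dres /xbar /xhat /eps /tau /=.
by apply/matrixP => i j; rewrite !mxE; field; rewrite t_neq0 gt_eqF ?eta_gt0.
Qed.

Lemma tau_lam_step k : (1 <= k)%N ->
  tau k.+1 *: (lam k.+1 - lbar t lam k) = (lhat k.+1 - lhat k) + eps *: (lam k - lam k.-1).
Proof.
case: k => // k _; have t_neq0 : t k.+2 != 0 by rewrite gt_eqF // (lt_le_trans ltr01) ?t_ge1.
rewrite /lbar /lhat /eps /tau /=.
by apply/matrixP => i j; rewrite !mxE; field; rewrite t_neq0 gt_eqF ?eta_gt0.
Qed.

Lemma x_convex k :
  x k.+1 = (1 - (tau k.+1)^-1) *: x k + (tau k.+1)^-1 *: xhat k.+1.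
Proof. exact/extrapolation_convex/lt0r_neq0/tau_gt0. Qed.

Lemma lam_convex k :
  lam k.+1 = (1 - (tau k.+1)^-1) *: lam k + (tau k.+1)^-1 *: lhat k.+1.
Proof. exact/extrapolation_convex/lt0r_neq0/tau_gt0. Qed.

Lemma A_x_convex k : A *m x k.+1 - b
  = (1 - (tau k.+1)^-1) *: (A *m x k - b) + (tau k.+1)^-1 *: (A *m xhat k.+1 - b).
Proof.
rewrite {1}(x_convex k) mulmxDr -!scalemxAr.
by apply/matrixP => i j; rewrite !mxE; ring.
Qed.

Lemma Fpen_convex u v a : 0 <= a <= 1 ->
  Fpen (a *: u + (1 - a) *: v) <= a * Fpen u + (1 - a) * Fpen v.
Proof.
move=> a01; rewrite /Fpen.
have -> : A *m (a *: u + (1 - a) *: v) - b = a *: (A *m u - b) + (1 - a) *: (A *m v - b).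
  rewrite mulmxDr -!scalemxAr.
  by apply/matrixP => i j; rewrite !mxE; ring.
have := ler_wpM2l (_ : 0 <= beta / 2) (sqn_convex (A *m u - b) (A *m v - b) a01).
by rewrite divr_ge0 // => /(_ isT); have := f_cvx u v a01; lra.
Qed.

(* The step [x k.+1] almost minimizes [Fpen] with multiplier [lhat k.+1],
   up to the proximal residual [dres k]. *)
Definition approx_subgrad_ineq k := forall u,
  Fpen (x k.+1) - dotv (A^T *m lhat k.+1 + gamma^-1 *: dres k) (u - x k.+1)
  - 1 / (2 * gamma) * sqn (dres k) <= Fpen u.

Lemma approx_subgrad_of_linear_lower k g e :
  g = - (beta *: (A^T *m (A *m x k.+1 - b)) + gamma^-1 *: dres k + A^T *m lhat k.+1) ->
  e <= 1 / (2 * gamma) * sqn (dres k) ->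
  (forall u, f (x k.+1) + dotv g (u - x k.+1) - e <= f u) -> approx_subgrad_ineq k.
Proof.
move=> -> e_le f_lower u; have := f_lower u.
have := ler_wpM2l (_ : 0 <= beta / 2) (sqn_affine_lower A b (x k.+1) u).
rewrite divr_ge0 // => /(_ isT).
by rewrite /Fpen !(dotvNl, dotvDl, dotvZl); lra.
Qed.

(* [obj1 k z = f z + subprob_quad k z],
   [obj2 k z = dotv (grad (xbar k)) z + subprob_quad k z]. *)
Definition subprob_quad k z :=
  beta / 2 * sqn (A *m z - b) + 1 / (2 * gamma) * sqn (z - xbar t x k)
  + dotv (pk t eta lam k) (A *m z - b)
  + delta / 2 * sqn (cc t eta k *: (A *m z) - rk A b t eta x k).

Definition subprob_grad k z :=
  beta *: (A^T *m (A *m z - b)) + gamma^-1 *: (z - xbar t x k) + A^T *m pk t eta lam k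
  + (delta * cc t eta k) *: (A^T *m (cc t eta k *: (A *m z) - rk A b t eta x k)).

Definition subprob_curv k v :=
  beta / 2 * sqn (A *m v) + 1 / (2 * gamma) * sqn v
  + delta / 2 * sqn ((cc t eta k *: A) *m v).

Lemma subprob_quad_step k z v s :
  subprob_quad k (z + s *: v)
  = subprob_quad k z + s * dotv (subprob_grad k z) v + s ^+ 2 * subprob_curv k v.
Proof.
rewrite /subprob_quad /subprob_grad /subprob_curv.
move: (pk t eta lam k) (xbar t x k) (rk A b t eta x k) (cc t eta k) => P xb r c.
rewrite !scalemxAl !sqn_affine_step sqn_shift_step dotv_affine_step.
rewrite !(dotvDl, dotvZl) linearZ /= -!scalemxAl !dotvZl.
by field; rewrite gt_eqF.
Qed.

Lemma subprob_curv_ge0 k v : 0 <= subprob_curv k v.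
Proof.
rewrite /subprob_curv; do 2? apply: addr_ge0; apply: mulr_ge0; rewrite ?sqn_ge0 //.
- by rewrite divr_ge0.
- by rewrite divr_ge0 // mulr_ge0 // ltW.
- by rewrite divr_ge0 // ltW.
Qed.

Lemma subprob_grad_step k : (1 <= k)%N -> subprob_grad k (x k.+1)
  = beta *: (A^T *m (A *m x k.+1 - b)) + gamma^-1 *: dres k + A^T *m lhat k.+1.
Proof.
move=> k1; rewrite /subprob_grad A_xhat -(pk_step k1) (mulmxDr A^T (pk _ _ _ _)).
by rewrite /dres !addrA -scalemxAr.
Qed.

Lemma approx_subgrad_case1 :
  (forall k, (1 <= k)%N -> forall z,
     obj1 A b t eta x lam f beta gamma delta k (x k.+1)
     <= obj1 A b t eta x lam f beta gamma delta k z) ->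
  forall k, (1 <= k)%N -> approx_subgrad_ineq k.
Proof.
move=> x_opt k k1.
have grad_opt : grad (x k.+1) + subprob_grad k (x k.+1) = 0.
  apply: (grad_eq_of_lower_model f_C1) => v; exists (subprob_curv k v) => [|s _].
    exact: subprob_curv_ge0.
  have := x_opt k k1 (x k.+1 + s *: v); rewrite /obj1 -!addrA.
  by have := subprob_quad_step k (x k.+1) v s; rewrite /subprob_quad -!addrA; lra.
apply: (approx_subgrad_of_linear_lower (k := k) (g := grad (x k.+1)) (e := 0)).
- by apply/eqP; rewrite -addr_eq0 -subprob_grad_step // grad_opt.
- by rewrite mulr_ge0 ?sqn_ge0 // divr_ge0 // mulr_ge0 // ltW.
- by move=> u; rewrite subr0; exact: convex_gradient_ineq.
Qed.

Lemma approx_subgrad_case2 :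
  (exists L : R, 0 < L /\
     (forall y z, enorm (grad y - grad z) <= L * enorm (y - z)) /\
     gamma <= 1 / L /\
     (forall k, (1 <= k)%N -> forall z,
        obj2 A b t eta x lam grad beta gamma delta k (x k.+1)
        <= obj2 A b t eta x lam grad beta gamma delta k z)) ->
  forall k, (1 <= k)%N -> approx_subgrad_ineq k.
Proof.
case=> L [L_gt0 [grad_lip [gamma_le x_opt]]] k k1; set xb := xbar t x k.
have grad_opt : grad xb + subprob_grad k (x k.+1) = 0.
  apply: eq0_of_dotv_ge0 => v; apply: (@ge0_of_forall_small _ _ (subprob_curv k v)) => s s01.
  have := x_opt k k1 (x k.+1 + s *: v); rewrite /obj2 -!addrA.
  have := subprob_quad_step k (x k.+1) v s; rewrite /subprob_quad -!addrA dotvDr dotvZr dotvDl.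
  have s_gt0 : 0 < s by case/andP: s01.
  move=> q_step obj_le; rewrite -(pmulr_rge0 _ s_gt0); lra.
have L_le : L / 2 <= 1 / (2 * gamma).
  rewrite ler_pdivlMr // in gamma_le.
  rewrite ler_pdivlMr ?mulr_gt0 //.
  by have -> : L / 2 * (2 * gamma) = gamma * L by field.
apply: (approx_subgrad_of_linear_lower (k := k) (g := grad xb) (e := L / 2 * sqn (dres k))).
- by apply/eqP; rewrite -addr_eq0 -subprob_grad_step // grad_opt.
- by rewrite ler_wpM2r ?sqn_ge0.
- move=> u; have := convex_gradient_ineq f_C1 f_cvx xb u.
  have := descent_lemma f_C1 grad_lip xb (x k.+1).
  have -> : u - x k.+1 = (u - xb) - (x k.+1 - xb) by rewrite opprB addrA subrK.
  by rewrite !dotvBr /dres -/xb; lra.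
Qed.

Section Energy.
Variables (xo : 'cV[R]_n) (lo : 'cV[R]_m).
Hypotheses (kkt : KKT_set grad A b xo lo)
  (subgrad : forall k, (1 <= k)%N -> approx_subgrad_ineq k).

Definition gap k := Fpen (x k) - Fpen xo + dotv lo (A *m x k - b).
Definition primal_dist k := sqn (xhat k - xo) / 2 + eps / 2 * sqn (x k.-1 - xo).
Definition dual_dist k := sqn (lhat k - lo) / 2 + eps / 2 * sqn (lam k.-1 - lo).
Definition energy k := tau k ^+ 2 * gap k + primal_dist k / gamma + dual_dist k / delta.

Lemma A_xo : A *m xo = b.
Proof. by case: kkt. Qed.

Lemma gap_ge0 k : 0 <= gap k.
Proof.
have := convex_gradient_ineq f_C1 f_cvx xo (x k).
have [_ /eqP] := kkt; rewrite addr_eq0 => /eqP ->.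
rewrite dotvNl -(dotv_mulmx A) mulmxBr A_xo.
have : 0 <= beta / 2 * sqn (A *m x k - b) by rewrite mulr_ge0 ?sqn_ge0 ?divr_ge0.
by rewrite /gap /Fpen A_xo subrr sqn0 mulr0 addr0; lra.
Qed.

Lemma gap_step k : (1 <= k)%N ->
  tau k.+1 ^+ 2 * gap k.+1
  <= (tau k.+1 ^+ 2 - tau k.+1) * gap k
     - dotv (lhat k.+1 - lo) (tau k.+1 *: (A *m xhat k.+1 - b))
     - gamma^-1 * dotv (tau k.+1 *: dres k) (xhat k.+1 - xo)
     + sqn (tau k.+1 *: dres k) / (2 * gamma).
Proof.
move=> k1; set T := tau k.+1; set s := T^-1.
have T_gt0 : 0 < T := tau_gt0 (isT : (1 <= k.+1)%N).
have s01 : 0 <= 1 - s <= 1 := tau_inv_weight (isT : (1 <= k.+1)%N).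
set u := (1 - s) *: x k + (1 - (1 - s)) *: xo.
have u_step : u - x k.+1 = s *: (xo - xhat k.+1).
  by rewrite /u (x_convex k) -/T -/s; apply/matrixP => i j; rewrite !mxE; ring.
have lin : dotv (A^T *m lhat k.+1 + gamma^-1 *: dres k) (u - x k.+1)
    = - s * dotv (lhat k.+1) (A *m xhat k.+1 - b) - s * gamma^-1 * dotv (dres k) (xhat k.+1 - xo).
  rewrite u_step dotvZr dotvDl dotvZl -(dotv_mulmx A).
  have -> : A *m (xo - xhat k.+1) = - (A *m xhat k.+1 - b) by rewrite mulmxBr A_xo opprB.
  by rewrite -(opprB (xhat k.+1)) !dotvNr; ring.
have SI := subgrad k1 u; rewrite lin in SI.
have Fu := Fpen_convex (x k) xo s01; rewrite -/u in Fu.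
have ss : 1 - (1 - s) = s by rewrite opprB addrC subrK.
rewrite ss in Fu.
have gap1 : gap k.+1 <= (1 - s) * gap k - s * dotv (lhat k.+1 - lo) (A *m xhat k.+1 - b)
    - s * gamma^-1 * dotv (dres k) (xhat k.+1 - xo) + 1 / (2 * gamma) * sqn (dres k).
  by rewrite /gap A_x_convex -/T -/s (dotvDr _ _ lo) !dotvZr dotvBl; lra.
rewrite !dotvZr dotvZl sqnZ.
apply: le_trans (ler_wpM2l (sqr_ge0 T) gap1) _; rewrite le_eqVlt; apply/orP; left.
by apply/eqP; rewrite /s; field; rewrite !gt_eqF.
Qed.

Lemma energy_step k : (1 <= k)%N -> energy k.+1 <= energy k.
Proof.
move=> k1; set T0 := tau k; set T1 := tau k.+1.
have c_ge0 : 0 <= eps * (T0 - (1 + eps) / 2).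
  have -> : T0 - (1 + eps) / 2 = (t k - 1 / 2) / eta.
    by rewrite /T0 /tau /eps; field; rewrite gt_eqF ?eta_gt0.
  by rewrite mulr_ge0 ?eps_ge0 ?divr_ge0 ?(ltW eta_gt0) //; have := t_ge1 k1; lra.
have primal := extrapolation_identity (x k.-1) (x k) (xhat k.+1) xo T0 eps.
have dual := extrapolation_identity (lam k.-1) (lam k) (lhat k.+1) lo T0 eps.
cbv zeta in primal; cbv zeta in dual.
rewrite -/(xhat k) -(tau_dres k1) -/T1 in primal.
rewrite -/(lhat k) -(tau_lam_step k1) -/T1 (lam_step k1) scalerA dotvZl in dual.
have dual' : dotv (lhat k.+1 - lo) (T1 *: (A *m xhat k.+1 - b))
    = delta^-1 * ((T1 * delta) * dotv (A *m xhat k.+1 - b) (lhat k.+1 - lo)).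
  by rewrite dotvZr dotvC; field; rewrite gt_eqF.
rewrite dual in dual'.
have := gap_step k1; rewrite -/T1 dual' primal => step.
have := tau_sq_step k1; rewrite -/T0 -/T1 => T_sq.
have := ler_wpM2r (gap_ge0 k) T_sq.
have := sqn_ge0 ((T1 * delta) *: (A *m xhat k.+1 - b)).
have := mulr_ge0 c_ge0 (sqn_ge0 (x k - x k.-1)).
have := mulr_ge0 c_ge0 (sqn_ge0 (lam k - lam k.-1)).
rewrite /energy /primal_dist /dual_dist -/T0 -/T1 /=.
move=> lam_c x_c D_ge0 gap_T.
have g1 : 0 <= gamma^-1 by rewrite invr_ge0 ltW.
have d1 : 0 <= delta^-1 by rewrite invr_ge0 ltW.
have := mulr_ge0 g1 x_c; have := mulr_ge0 d1 lam_c; have := mulr_ge0 d1 D_ge0.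
lra.
Qed.

Lemma energy_le k : (1 <= k)%N -> energy k <= energy 1.
Proof.
elim: k => // -[_ _|k IH _] //.
exact: le_trans (energy_step (isT : (1 <= k.+1)%N)) (IH isT).
Qed.

Lemma primal_dist_ge0 k : 0 <= primal_dist k.
Proof. by rewrite addr_ge0 ?mulr_ge0 ?divr_ge0 ?sqn_ge0 ?eps_ge0. Qed.

Lemma dual_dist_ge0 k : 0 <= dual_dist k.
Proof. by rewrite addr_ge0 ?mulr_ge0 ?divr_ge0 ?sqn_ge0 ?eps_ge0. Qed.

Lemma energy_bounds k : (1 <= k)%N ->
  [/\ tau k ^+ 2 * gap k <= energy 1, sqn (xhat k - xo) <= 2 * gamma * energy 1
    & sqn (lhat k - lo) <= 2 * delta * energy 1].
Proof.
move=> k1; have := energy_le k1; rewrite {1}/energy.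
have := mulr_ge0 (sqr_ge0 (tau k)) (gap_ge0 k).
have p0 := divr_ge0 (primal_dist_ge0 k) (ltW gamma_gt0).
have d0 := divr_ge0 (dual_dist_ge0 k) (ltW delta_gt0).
have := mulr_ge0 eps_ge0 (sqn_ge0 (x k.-1 - xo)).
have := mulr_ge0 eps_ge0 (sqn_ge0 (lam k.-1 - lo)).
move=> el ex g0 E; split; first by lra.
  have : primal_dist k / gamma <= energy 1 by lra.
  by rewrite ler_pdivrMr // /primal_dist; lra.
have : dual_dist k / delta <= energy 1 by lra.
by rewrite ler_pdivrMr // /dual_dist; lra.
Qed.

Lemma x_bounded : exists B, forall k, sqn (x k - xo) <= B.
Proof.
exists (sqn (x 1%N - xo) + 2 * gamma * energy 1) => k.
suff x_le j : (1 <= j)%N -> sqn (x j - xo) <= sqn (x 1%N - xo) + 2 * gamma * energy 1.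
  by case: k => [|k]; [rewrite x_init|]; exact: x_le.
move: j; apply: (sqn_le_of_convex_recursion (u := fun k => x k - xo)
  (w := fun k => xhat k.+1 - xo) (r := fun k => 1 - (tau k.+1)^-1)) => j _.
have [_ xhat_le _] := energy_bounds (isT : (1 <= j.+1)%N).
split=> //; first exact: tau_inv_weight.
by rewrite {1}(x_convex j); apply/matrixP => i l; rewrite !mxE; ring.
Qed.

Lemma lam_bounded : exists B, forall k, sqn (lam k - lo) <= B.
Proof.
exists (sqn (lam 1%N - lo) + 2 * delta * energy 1) => k.
suff lam_le j : (1 <= j)%N -> sqn (lam j - lo) <= sqn (lam 1%N - lo) + 2 * delta * energy 1.
  by case: k => [|k]; [rewrite lam_init|]; exact: lam_le.
move: j; apply: (sqn_le_of_convex_recursion (u := fun k => lam k - lo)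
  (w := fun k => lhat k.+1 - lo) (r := fun k => 1 - (tau k.+1)^-1)) => j _.
have [_ _ lhat_le] := energy_bounds (isT : (1 <= j.+1)%N).
split=> //; first exact: tau_inv_weight.
by rewrite {1}(lam_convex j); apply/matrixP => i l; rewrite !mxE; ring.
Qed.

Lemma tau_dres_bounded : exists C, forall k, (1 <= k)%N -> tau k.+1 ^+ 2 * sqn (dres k) <= C.
Proof.
have [B x_le] := x_bounded.
exists (2 * (4 * (2 * gamma * energy 1)) + 2 * eps ^+ 2 * (4 * B)) => k k1.
have [_ xhat1_le _] := energy_bounds (isT : (1 <= k.+1)%N).
have [_ xhat0_le _] := energy_bounds k1.
have := ler_wpM2l (sqr_ge0 eps) (sqnB_le_center (x_le k) (x_le k.-1)).
have := sqnB_le_center xhat1_le xhat0_le.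
rewrite -sqnZ (tau_dres k1); have := sqnD_le (xhat k.+1 - xhat k) (eps *: (x k - x k.-1)).
by rewrite sqnZ; lra.
Qed.

Definition lmix k := lhat k + eps *: lam k.-1.

(* Source of the bound [tau k ^+ 2 * sqn (A *m x k - b) = O(1)]: by [feas_shift_step]
   this quantity moves by convex combinations with the bounded [- delta^-1 *: lmix k]. *)
Definition feas_shift k := tau k ^+ 2 *: (A *m x k - b) - delta^-1 *: lmix k.

Lemma lmix_step k : (1 <= k)%N ->
  lmix k.+1 = lmix k + (delta * tau k.+1) *: (A *m xhat k.+1 - b).
Proof.
move=> k1; have := tau_lam_step k1; rewrite lam_step // scalerA mulrC => ->.
by rewrite /lmix /=; apply/matrixP => i j; rewrite !mxE; ring.
Qed.

Lemma feas_shift_step k : (1 <= k)%N ->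
  let r := (tau k.+1 ^+ 2 - tau k.+1) / tau k ^+ 2 in
  feas_shift k.+1 = r *: feas_shift k + (1 - r) *: - (delta^-1 *: lmix k).
Proof.
move=> k1 r; have T0 := lt0r_neq0 (tau_gt0 k1).
have T1 := lt0r_neq0 (tau_gt0 (isT : (1 <= k.+1)%N)).
rewrite /feas_shift A_x_convex (lmix_step k1) /r.
move: (A *m x k - b) (A *m xhat k.+1 - b) (lmix k) => y0 yw v0.
by apply/matrixP => i j; rewrite !mxE; field; rewrite T0 T1 gt_eqF.
Qed.

Lemma tau_sq_feas_bounded :
  exists C, forall k, (1 <= k)%N -> tau k ^+ 2 * sqn (A *m x k - b) <= C.
Proof.
have [B lam_le] := lam_bounded.
pose Bv := delta^-1 ^+ 2 * (2 * (2 * (2 * delta * energy 1) + 2 * sqn lo)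
                              + 2 * eps ^+ 2 * (2 * B + 2 * sqn lo)).
have lmix_le k : (1 <= k)%N -> sqn (- (delta^-1 *: lmix k)) <= Bv.
  move=> k1; have [_ _ lhat_le] := energy_bounds k1.
  rewrite sqnN sqnZ ler_wpM2l ?sqr_ge0 //; apply: le_trans (sqnD_le _ _) _.
  have lam_c : sqn (lam k.-1) <= 2 * B + 2 * sqn lo.
    by have := sqn_le_center (lam k.-1) lo; have := lam_le k.-1; lra.
  have := ler_wpM2l (sqr_ge0 eps) lam_c; have := sqn_le_center (lhat k) lo.
  by rewrite sqnZ; lra.
have shift_le : forall k, (1 <= k)%N -> sqn (feas_shift k) <= sqn (feas_shift 1%N) + Bv.
  apply: (sqn_le_of_convex_recursion (w := fun k => - (delta^-1 *: lmix k))
    (r := fun k => (tau k.+1 ^+ 2 - tau k.+1) / tau k ^+ 2)) => k k1.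
  split; [|exact: feas_shift_step|exact: lmix_le].
  have T1_ge1 := tau_ge1 (isT : (1 <= k.+1)%N).
  have T0_gt0 : 0 < tau k ^+ 2 by rewrite exprn_gt0 // tau_gt0.
  rewrite divr_ge0 ?(ltW T0_gt0) ?ler_pdivrMr // ?mul1r ?tau_sq_step //=.
  by rewrite subr_ge0 expr2 ler_peMl // (le_trans ler01).
exists (2 * (sqn (feas_shift 1%N) + Bv) + 2 * Bv) => k k1.
have T_ge1 := tau_ge1 k1.
have -> : A *m x k - b = (tau k ^+ 2)^-1 *: (feas_shift k + delta^-1 *: lmix k).
  by rewrite /feas_shift subrK scalerA mulVf ?scale1r // lt0r_neq0 ?exprn_gt0 ?tau_gt0.
have T2_gt0 : 0 < tau k ^+ 2 by rewrite exprn_gt0 // tau_gt0.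
rewrite sqnZ mulrA [_ ^-1 ^+ 2]expr2 mulrA mulfV ?lt0r_neq0 // mul1r.
apply: le_trans (ler_piMl (sqn_ge0 _) _) _.
  by rewrite invf_le1 // exprn_ege1.
apply: le_trans (sqnD_le _ _) _; rewrite -(sqnN (_ *: lmix k)).
by have := shift_le k k1; have := lmix_le k k1; lra.
Qed.

Lemma near_residual_le e : 0 < e -> \forall k \near \oo, sqn (A *m x k - b) <= e.
Proof.
move=> e_gt0; have [C C_ge] := tau_sq_feas_bounded.
apply: (near_le_of_scaled_bound tau_cvgy e_gt0).
by near=> k; apply: C_ge; near: k; exact: nbhs_infty_ge.
Unshelve. all: by end_near.
Qed.

Lemma near_gap_le e : 0 < e -> \forall k \near \oo, gap k <= e.
Proof.
move=> e_gt0; apply: (near_le_of_scaled_bound (C := energy 1) tau_cvgy e_gt0).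
near=> k; have k1 : (1 <= k)%N by near: k; exact: nbhs_infty_ge.
by have [] := energy_bounds k1.
Unshelve. all: by end_near.
Qed.

Lemma near_dres_le e : 0 < e -> \forall k \near \oo, sqn (dres k) <= e.
Proof.
move=> e_gt0; have [C C_ge] := tau_dres_bounded.
have tau_succ : (fun k => tau k.+1) @ \oo --> +oo.
  by have := tau_cvgy; rewrite -cvg_shiftS.
apply: (near_le_of_scaled_bound tau_succ e_gt0).
by near=> k; apply: C_ge; near: k; exact: nbhs_infty_ge.
Unshelve. all: by end_near.
Qed.

Lemma near_Fpen_le e : 0 < e -> \forall k \near \oo, Fpen (x k) <= Fpen xo + e.
Proof.
move=> e_gt0; have e2_gt0 : 0 < e / 2 by rewrite divr_gt0.
have thr_gt0 : 0 < (e / 2) ^+ 2 / (sqn lo + 1).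
  by rewrite divr_gt0 ?exprn_gt0 ?ltr_wpDl ?sqn_ge0.
near=> k.
have feas : sqn (A *m x k - b) <= (e / 2) ^+ 2 / (sqn lo + 1) by near: k; exact: near_residual_le.
have gap_le : gap k <= e / 2 by near: k; exact: near_gap_le.
have := lerNnormlW (normr_dotv_le (sqn_ge0 lo) e2_gt0 (lexx _) feas).
by rewrite /gap in gap_le; lra.
Unshelve. all: by end_near.
Qed.

Lemma near_lagrangian_hat_ge z e : 0 < e ->
  \forall k \near \oo, Fpen xo - e <= Fpen z + dotv (lhat k.+1) (A *m z - b).
Proof.
move=> e_gt0; pose e3 := e / 3; have e3_gt0 : 0 < e3 by rewrite divr_gt0.
have [B x_le] := x_bounded.
pose Bz := sqn (z - xo) + B.
have Bz_ge0 : 0 <= Bz by rewrite addr_ge0 ?sqn_ge0 // (le_trans (sqn_ge0 _) (x_le 0%N)).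
pose Bl := 2 * delta * energy 1.
have Bl_ge0 : 0 <= Bl by have [_ _ /(le_trans (sqn_ge0 _))] := energy_bounds (isT : (1 <= 1)%N).
have ge3_gt0 : 0 < gamma * e3 by rewrite mulr_gt0.
have th1 : 0 < e3 ^+ 2 / (Bl + 1) by rewrite divr_gt0 ?exprn_gt0 ?ltr_wpDl.
have th2 : 0 < (gamma * e3) ^+ 2 / (4 * Bz + 1).
  by rewrite divr_gt0 ?exprn_gt0 ?ltr_wpDl ?mulr_ge0.
have th3 : 0 < 2 * gamma * e3 by rewrite !mulr_gt0.
near=> k.
have k1 : (1 <= k)%N by near: k; exact: nbhs_infty_ge.
have feas : sqn (A *m x k.+1 - b) <= e3 ^+ 2 / (Bl + 1).
  near: k; apply: (near_infty_succ (P := fun j => sqn (A *m x j - b) <= _)).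
  exact: near_residual_le.
have d_small : sqn (dres k) <= (gamma * e3) ^+ 2 / (4 * Bz + 1) by near: k; exact: near_dres_le.
have d_sq : sqn (dres k) <= 2 * gamma * e3 by near: k; exact: near_dres_le.
have [_ _ lhat_le] := energy_bounds (isT : (1 <= k.+1)%N).
have mult := lerNnormlW (normr_dotv_le Bl_ge0 e3_gt0 lhat_le feas).
have zx : sqn (z - x k.+1) <= 4 * Bz.
  have B_ge0 : 0 <= B := le_trans (sqn_ge0 _) (x_le 0%N).
  apply: (sqnB_le_center (w := xo)); rewrite /Bz.
    by have := sqn_ge0 (z - xo); lra.
  by have := x_le k.+1; have := sqn_ge0 (z - xo); lra.
have prox : gamma^-1 * dotv (dres k) (z - x k.+1) <= e3.
  have g_inv : 0 <= gamma^-1 by rewrite invr_ge0 ltW.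
  have := normr_dotv_le (mulr_ge0 (ler0n _ 4) Bz_ge0) ge3_gt0 zx d_small.
  rewrite dotvC => /(le_trans (ler_norm _)) /(ler_wpM2l g_inv).
  by rewrite mulKf ?lt0r_neq0.
have sq : 1 / (2 * gamma) * sqn (dres k) <= e3.
  by rewrite mul1r ler_pdivrMl ?mulr_gt0.
have A_zx : A *m (z - x k.+1) = (A *m z - b) - (A *m x k.+1 - b).
  by rewrite mulmxBr; apply/matrixP => i j; rewrite !mxE; ring.
have := subgrad k1 z; rewrite dotvDl dotvZl -(dotv_mulmx A) A_zx dotvBr.
have : 3 * e3 = e by rewrite /e3; field.
have := gap_ge0 k.+1; rewrite /gap; rewrite dotvBl in mult; lra.
Unshelve. all: by end_near.
Qed.

Lemma near_lagrangian_ge z e : 0 < e ->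
  \forall k \near \oo, Fpen xo - e <= Fpen z + dotv (lam k) (A *m z - b).
Proof.
move=> e_gt0; have e2_gt0 : 0 < e / 2 by rewrite divr_gt0.
have -> : e = 2 * (e / 2) by field.
apply: (averaging_lower_bound (c := fun k => Fpen z + dotv (lhat k) (A *m z - b))
  e2_gt0 tau_cvgy).
near=> k; have k1 : (1 <= k)%N by near: k; exact: nbhs_infty_ge.
split; [exact: tau_ge1 | exact: tau_step | | by near: k; exact: near_lagrangian_hat_ge].
by rewrite /lhat /= dotvDl dotvZl dotvBl; ring.
Unshelve. all: by end_near.
Qed.

Section ClusterPoint.
Variables (xs : 'cV[R]_n) (ls : 'cV[R]_m).
Hypothesis xs_ls_cluster : cluster ((fun k => (x k, lam k)) @ \oo) (xs, ls).

Lemma cvg_residual_at_cluster :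
  sqn (A *m q.1 - b) @[q --> (xs, ls)] --> sqn (A *m xs - b).
Proof. by apply: cvg_sqn_affine => j; exact: cvg_fst_entries. Qed.

Lemma cluster_feasible : A *m xs = b.
Proof.
have := cluster_ge (h := fun q => - sqn (A *m q.1 - b)) (c := 0) xs_ls_cluster.
move=> /(_ (cvgN cvg_residual_at_cluster)) /=.
have near_res e : 0 < e -> \forall k \near \oo, 0 - e <= - sqn (A *m x k - b).
  by move=> e_gt0; apply: filterS (near_residual_le e_gt0) => k; lra.
move=> /(_ near_res); rewrite oppr_ge0 => res_le0.
have /sqn_eq0/eqP : sqn (A *m xs - b) = 0 by apply/eqP; rewrite eq_le res_le0 sqn_ge0.
by rewrite subr_eq0 => /eqP.
Qed.

Lemma cluster_Fpen_le : Fpen xs <= Fpen xo.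
Proof.
have := cluster_ge (h := fun q => - Fpen q.1) (c := - Fpen xo) xs_ls_cluster.
have f_cont : f q.1 @[q --> (xs, ls)] --> f xs.
  have fst_cvg : (fun q : 'cV[R]_n * 'cV[R]_m => q.1) @ (xs, ls) --> xs by exact: cvg_fst.
  exact: (cvg_comp _ _ fst_cvg (differentiable_continuous (f_C1.1 xs).1)).
have Fpen_cont : Fpen q.1 @[q --> (xs, ls)] --> Fpen xs.
  by apply: cvgD f_cont _; apply: cvgMl_tmp; exact: cvg_residual_at_cluster.
move=> /(_ (cvgN Fpen_cont)) /=.
have near_F e : 0 < e -> \forall k \near \oo, - Fpen xo - e <= - Fpen (x k).
  by move=> e_gt0; apply: filterS (near_Fpen_le e_gt0) => k; lra.
by move=> /(_ near_F); rewrite lerN2.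
Qed.

Lemma cluster_lagrangian_ge z : Fpen xo <= Fpen z + dotv ls (A *m z - b).
Proof.
have := cluster_ge (h := fun q => Fpen z + dotv q.2 (A *m z - b)) (c := Fpen xo)
  xs_ls_cluster.
apply; last by move=> e /near_lagrangian_ge.
apply: cvgD; first exact: cvg_cst.
by apply: cvg_dotv_entries => i; [exact: cvg_snd_entries | exact: cvg_cst].
Qed.

Lemma cluster_KKT : KKT_set grad A b xs ls.
Proof.
have Axs := cluster_feasible; split => //.
apply: (lagrangian_min_grad f_C1 beta_ge0 Axs) => z.
have := cluster_lagrangian_ge z; have := cluster_Fpen_le.
by rewrite /Fpen Axs subrr sqn0 mulr0 addr0; lra.
Qed.

End ClusterPoint.

End Energy.

End Algorithm.

Unset Implicit Arguments.

Theorem lemma4p1 (R : realType) (n m : nat)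
  (f : 'cV[R]_n -> R) (grad : 'cV[R]_n -> 'cV[R]_n)
  (A : 'M[R]_(m, n)) (b : 'cV[R]_m)
  (t : nat -> R) (rho eta gamma delta beta : R)
  (x : nat -> 'cV[R]_n) (lam : nat -> 'cV[R]_m) :
  convex_fun f ->
  C1_with_gradient f grad ->
  (exists xs ls, KKT_set grad A b xs ls) ->
  0 < rho <= 1 ->
  param_seq t rho ->
  rho <= eta <= 1 -> 0 < gamma -> 0 < delta -> 0 <= beta ->
  x 0%N = x 1%N -> lam 0%N = lam 1%N ->
  ((* Case I *)
   (forall k, (1 <= k)%N -> forall z,
      obj1 A b t eta x lam f beta gamma delta k (x k.+1)
      <= obj1 A b t eta x lam f beta gamma delta k z)
   \/
   (* Case II *)
   (exists L : R, 0 < L /\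
      (forall y z, enorm (grad y - grad z) <= L * enorm (y - z)) /\
      gamma <= 1 / L /\
      (forall k, (1 <= k)%N -> forall z,
        obj2 A b t eta x lam grad beta gamma delta k (x k.+1)
        <= obj2 A b t eta x lam grad beta gamma delta k z))) ->
  (forall k, (1 <= k)%N ->
     lam k.+1 = lbar t lam k
                + delta *: (cc t eta k *: (A *m x k.+1) - rk A b t eta x k)) ->
  forall (xs : 'cV[R]_n) (ls : 'cV[R]_m),
    cluster ((fun k => (x k, lam k)) @ \oo) (xs, ls) ->
    KKT_set grad A b xs ls.
Proof.
move=> f_cvx f_C1 [xo [lo kkt]] rho_range t_param eta_range gamma_gt0 delta_gt0 beta_ge0.
move=> x_init lam_init cases lam_update xs ls xs_ls_cluster.
have subgrad : forall k, (1 <= k)%N -> approx_subgrad_ineq f A b t eta gamma beta x lam k.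
  case: cases => x_opt.
  - exact: (approx_subgrad_case1 f_cvx f_C1 rho_range t_param eta_range gamma_gt0
      delta_gt0 beta_ge0 lam_update x_opt).
  - exact: (approx_subgrad_case2 f_cvx f_C1 rho_range t_param eta_range gamma_gt0
      beta_ge0 lam_update x_opt).
exact: (cluster_KKT f_cvx f_C1 rho_range t_param eta_range gamma_gt0 delta_gt0 beta_ge0
  x_init lam_init lam_update kkt subgrad xs_ls_cluster).
Qed.
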